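(* Let $N,\ell,k$ be integers with $1\le\ell<k\le N$, and let $\phi_k:S_{N,k}\to S_{N,k-\ell}$ be the truncation $\langle\pi(1),\dots,\pi(k)\rangle\mapsto\langle\pi(1),\dots,\pi(k-\ell)\rangle$. For every $\pi\in S_{N,k}$, the number of distinct subpermutations $\phi_k(\sigma)$, as $\sigma$ ranges over the neighbours of $\pi$ in $\mathcal U_{N,\ell,k}$, is at most $(2\ell+1)^k$.
   Context: $[N]=\{1,\dots,N\}$, $S_N$ is the set of permutations of $[N]$. For $\pi,\sigma\in S_N$, $\delta(\pi,\sigma)=\max_{i\in[N]}|\pi^{-1}(i)-\sigma^{-1}(i)|$. For $1\le k\le N$, $S_{N,k}$ is the set of injective maps $[k]\to[N]$; a permutation $\pi'\in S_N$ extends $\pi\in S_{N,k}$ if $\pi'(i)=\pi(i)$ for all $i\in[k]$. For $\pi,\sigma\in S_{N,k}$, $\delta(\pi,\sigma)=\min\{\delta(\pi',\sigma'):\pi',\sigma'\in S_N$ extending $\pi,\sigma$ respectively$\}$. The $k$-restricted uncertainty graph $\mathcal U_{N,\ell,k}$ has vertex set $S_{N,k}$, with $\pi\sim\sigma$ iff $\pi(1)\ne\sigma(1)$ and $\delta(\pi,\sigma)\le\ell$. *)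

(* [N] is modelled by 'I_N (0-based; distances are shift-invariant). *)
From HB Require Import structures.
From mathcomp Require Import all_boot all_order all_fingroup.
Set Implicit Arguments. Unset Strict Implicit. Unset Printing Implicit Defensive.

Definition distn (m n : nat) : nat := (m - n) + (n - m).

Definition delta_perm (N : nat) (p s : {perm 'I_N}) : nat :=
  \max_(i : 'I_N) distn ((p^-1)%g i) ((s^-1)%g i).

(* Elements of S_{N,k}: injective maps [k] -> [N], as finite functions
   (injectivity is imposed separately by [injectiveb]). *)
Definition partperm (N k : nat) := {ffun 'I_k -> 'I_N}.

Definition extends (N k : nat) (p : {perm 'I_N}) (pi : partperm N k) : bool :=
  [forall i : 'I_k, forall j : 'I_N, (val j == val i) ==> (p j == pi i)].

(* delta for partial permutations: min over extensions (default N is never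
   attained when k <= N, since extensions exist and all distances are < N). *)
Definition delta_part (N k : nat) (pi sg : partperm N k) : nat :=
  \big[minn/N]_(p : {perm 'I_N} | extends p pi)
    \big[minn/N]_(s : {perm 'I_N} | extends s sg) delta_perm p s.

(* adjacency in U_{N,l,k}; pi(1) is pi at index 0 *)
Definition uadj (N l k : nat) (k_gt0 : 0 < k) (pi sg : partperm N k) : bool :=
  (pi (Ordinal k_gt0) != sg (Ordinal k_gt0)) && (delta_part pi sg <= l).

Definition unbrs (N l k : nat) (k_gt0 : 0 < k) (pi : partperm N k) : {set partperm N k} :=
  [set sg : partperm N k | injectiveb sg && uadj l k_gt0 pi sg].

Definition trunc (N l k : nat) (sg : partperm N k) : partperm N (k - l) :=
  [ffun i : 'I_(k - l) => sg (widen_ord (leq_subr l k) i)].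

From HB Require Import structures.
From mathcomp Require Import all_boot all_order all_fingroup.
From mathcomp Require Import zify.

(* If sigma is a neighbour of pi in U_{N,l,k}, there are extensions
   p of pi and s of sigma with delta(p, s) <= l.  Hence for every position i the
   value sigma(i) = s(i) sits in p at a position m with |m - i| <= l; when
   i < k - l this position satisfies m < k, so sigma(i) = pi(m).  Thus the
   truncation phi_k(sigma) is determined by a choice, for each of its k - l
   positions, of an offset m - i + l in [0, 2l]: there are at most
   (2l+1)^(k-l) <= (2l+1)^k such truncations. *)

Lemma bigmin_witness {I : finType} {P : pred I} {F : I -> nat} {N l : nat} :
  l < N -> \big[minn/N]_(x | P x) F x <= l -> exists2 x, P x & F x <= l.
Proof.
move=> lN min_le.
have [/existsP [x /andP [Px Fx]]|/existsPn none] :=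
  boolP [exists x, P x && (F x <= l)]; first by exists x.
suff : l < \big[minn/N]_(x | P x) F x by rewrite ltnNge min_le.
apply: (big_ind (fun m => l < m)) => // [a b la lb|x Px].
  by rewrite leq_min la lb.
by move: (none x); rewrite Px /= ltnNge.
Qed.

Lemma extendsE (N k : nat) (p : {perm 'I_N}) (pi : partperm N k) :
  extends p pi -> forall (i : 'I_k) (j : 'I_N), val j = val i -> p j = pi i.
Proof.
move=> ext i j ji.
by apply/eqP; apply: (implyP (forallP (forallP ext i) j)); rewrite ji.
Qed.
Arguments extendsE {N k p pi}.

Lemma delta_perm_ge {N : nat} (p s : {perm 'I_N}) (x : 'I_N) :
  distn ((p^-1)%g x) ((s^-1)%g x) <= delta_perm p s.
Proof. exact: (leq_bigmax x). Qed.

Lemma neighbour_window (N l k : nat) (pi sg : partperm N k) :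
  k <= N -> l < N -> delta_part pi sg <= l ->
  forall i : 'I_k, i + l < k -> exists m : 'I_k, distn m i <= l /\ sg i = pi m.
Proof.
move=> kN lN close i ilk.
have [p ext_p /(bigmin_witness lN) [s ext_s dps]] := bigmin_witness lN close.
have iN : i < N := leq_trans (ltn_ord i) kN.
have s_i : s (Ordinal iN) = sg i := extendsE ext_s i (Ordinal iN) erefl.
have disp : distn ((p^-1)%g (sg i)) i <= l.
  rewrite -s_i; apply: leq_trans dps.
  by have := delta_perm_ge p s (s (Ordinal iN)); rewrite permK.
have mk : (p^-1)%g (sg i) < k by move: disp; rewrite /distn; lia.
exists (Ordinal mk); split=> //.
by rewrite -(extendsE ext_p (Ordinal mk) ((p^-1)%g (sg i))) // permKV.
Qed.
Arguments neighbour_window {N l k pi sg}.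

Lemma card_ffun_candidates {I T : finType} {c : nat} (G : I -> 'I_c -> T)
    (A : {set {ffun I -> T}}) :
  (forall t, t \in A -> forall i, exists d, t i = G i d) -> #|A| <= c ^ #|I|.
Proof.
move=> cand.
pose choose_cands (f : {ffun I -> 'I_c}) := [ffun i => G i (f i)].
suff sub : A \subset choose_cands @: [set: {ffun I -> 'I_c}].
  by apply: leq_trans (subset_leq_card sub) _;
     rewrite (leq_trans (leq_imset_card _ _)) // cardsT card_ffun card_ord.
apply/subsetP=> t tA; have [f tf] := fin_all_exists (cand t tA).
by apply/imsetP; exists [ffun i => f i]; rewrite ?inE //; apply/ffunP=> i;
   rewrite !ffunE tf.
Qed.

Theorem mainTheorem7 (N l k : nat) (hl : 1 <= l) (hlk : l < k) (hkN : k <= N)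
  (pi : partperm N k) (hpi : injectiveb pi) :
  #|[set trunc l sg | sg in unbrs l (leq_ltn_trans (leq0n l) hlk) pi]|
    <= (2 * l + 1) ^ k.
Proof.
set k_gt0 := leq_ltn_trans (leq0n l) hlk.
pose window (i : 'I_(k - l)) (d : 'I_(2 * l + 1)) : 'I_N :=
  pi (insubd (Ordinal k_gt0) (i + d - l)).
apply: leq_trans (card_ffun_candidates window _ _) _; last first.
  by rewrite card_ord leq_pexp2l ?addn1 ?leq_subr.
move=> _ /imsetP [sg sg_nbr ->] i.
move: sg_nbr; rewrite inE => /and3P [_ _ close].
have [|m [mi sg_m]] := neighbour_window hkN (leq_trans hlk hkN) close
  (widen_ord (leq_subr l k) i); first by have := ltn_ord i; rewrite /=; lia.
have d_lt : m + l - i < 2 * l + 1 by move: mi; rewrite /distn /=; lia.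
exists (Ordinal d_lt); rewrite /trunc /window ffunE sg_m /=; congr (pi _).
have -> : i + (m + l - i) - l = m by move: mi; rewrite /distn /=; lia.
by rewrite valKd.
Qed.
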